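(* Let $r\ge 0$ and $n\ge 3r+1$ be integers, and let $F$ be a set of $r$ pairwise disjoint (independent) edges of the complete graph $K_n$. Then $m(K_n\setminus F)=r+2$, where $K_n\setminus F$ is the graph obtained from $K_n$ by deleting the edges in $F$.
   Context: All graphs are finite, simple and undirected. A list assignment $L$ for a graph $G$ assigns to each vertex $v$ a set $L(v)$ of colors; an $L$-coloring is a proper vertex coloring $c$ of $G$ with $c(v)\in L(v)$ for every vertex $v$. A $k$-list assignment is a list assignment with $|L(v)|=k$ for all $v$. $G$ is uniquely $k$-list colorable (U$k$LC) if there exists a $k$-list assignment $L$ such that $G$ has exactly one $L$-coloring. $G$ has property $M(k)$ if it is not U$k$LC, i.e. for every $k$-list assignment $L$, $G$ has either no $L$-coloring or at least two $L$-colorings. The m-number $m(G)$ is the least integer $k\ge 1$ such that $G$ has property $M(k)$. (Every U$k$LC graph is also U$(k-1)$LC, so $G$ is U$k$LC iff $k<m(G)$.) *)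

From mathcomp Require Import all_boot.
Set Implicit Arguments. Unset Strict Implicit. Unset Printing Implicit Defensive.

(* Colors are natural numbers (any countable supply suffices: a finite list
   assignment uses finitely many colors, which can be renamed into nat). *)

Definition simple_graph (T : finType) (adj : rel T) : Prop :=
  (forall x, ~~ adj x x) /\ (forall x y, adj x y = adj y x).

Definition k_list_assignment (T : finType) (k : nat) (L : T -> seq nat) : Prop :=
  forall v, uniq (L v) /\ size (L v) = k.

Definition L_coloring (T : finType) (adj : rel T) (L : T -> seq nat)
  (c : T -> nat) : Prop :=
  (forall v, c v \in L v) /\ (forall u v, adj u v -> c u != c v).

Definition unique_L_colorable (T : finType) (adj : rel T) (L : T -> seq nat) : Prop :=
  exists c, L_coloring adj L c /\
    forall c', L_coloring adj L c' -> forall v, c' v = c v.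

Definition UkLC (T : finType) (adj : rel T) (k : nat) : Prop :=
  exists L, k_list_assignment k L /\ unique_L_colorable adj L.

Definition propM (T : finType) (adj : rel T) (k : nat) : Prop := ~ UkLC adj k.

Definition is_m_number (T : finType) (adj : rel T) (m : nat) : Prop :=
  1 <= m /\ propM adj m /\ (forall k, 1 <= k -> k < m -> ~ propM adj k).

Definition Kn_minus (n : nat) (F : seq ('I_n * 'I_n)) : rel 'I_n :=
  fun x y => (x != y) && ~~ has (fun e => ((e.1 == x) && (e.2 == y)) ||
                                          ((e.1 == y) && (e.2 == x))) F.

Definition matching_of_size (n r : nat) (F : seq ('I_n * 'I_n)) : Prop :=
  uniq F /\ size F = r /\
  (forall e, e \in F -> e.1 != e.2) /\
  (forall e f, e \in F -> f \in F -> e != f ->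
     [/\ e.1 != f.1, e.1 != f.2, e.2 != f.1 & e.2 != f.2]).

From mathcomp Require Import all_boot zify.
Set Implicit Arguments. Unset Strict Implicit. Unset Printing Implicit Defensive.

(* Every edge of F has its first endpoint in the set A of first
   endpoints, so the vertices outside A form a clique.  Given a unique
   L-coloring c with lists of size r + 2 >= |A| + 2, each u outside A has a list
   color that is neither c u nor a color of A; by uniqueness some neighbour w of
   u carries it, and w lies outside A.  Iterating u |-> w inside that clique
   reaches a cycle, and shifting the colors one step along the cycle gives a
   second L-coloring.

   Let F = {a_i b_i} and let s_0, s_1, ... be the m >= r + 1
   unmatched vertices.  The lists a_i : {0..r}, b_i : {i, r+1..2r},
   s_j : {0..r-1, r+j} admit exactly one coloring: the vertices other than the
   b_i, and those other than the a_i, are cliques of size n - r whose lists lie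
   in {0..n-r-1}, so each clique uses every such color.  This forces s_j |-> r+j
   for j > 0 and some s_j |-> r, then b_i |-> i, s_j |-> r+j, a_i |-> i.
   Shrinking all lists around a unique coloring gives U(k)LC for all k <= r+1. *)

Lemma exists_notin (T : eqType) (s t : seq T) : uniq s -> size t < size s ->
  exists2 x, x \in s & x \notin t.
Proof.
move=> us lt_ts; case: (boolP (all (mem t) s)) => [/allP s_t|].
  by have := uniq_leq_size us s_t; rewrite leqNgt lt_ts.
by rewrite -has_predC => /hasP[x xs xt]; exists x.
Qed.

Lemma exists_imset_stable (T : finType) (f : T -> T) (S : {set T}) :
  S != set0 -> f @: S \subset S ->
  exists C : {set T}, [/\ C != set0, C \subset S & f @: C = C].
Proof.
elim: {S}#|S| {-2}S (leqnn #|S|) => [|k IH] S.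
  by rewrite leqn0 cards_eq0 => /eqP ->; rewrite eqxx.
move=> Sk S0 fS; have [fSS|fSS] := eqVneq (f @: S) S; first by exists S.
have fS0 : f @: S != set0.
  by case/set0Pn: S0 => x xS; apply/set0Pn; exists (f x); apply: imset_f.
have [||C [C0 CfS fC]] := IH (f @: S) _ fS0.
- have fS_proper : f @: S \proper S by rewrite properEneq fSS.
  by rewrite -ltnS (leq_trans (proper_card fS_proper)).
- exact: imsetS.
by exists C; split => //; apply: subset_trans CfS fS.
Qed.

Section ListColoring.
Variables (T : finType) (adj : rel T).

Lemma UkLC_pred k : UkLC adj k.+2 -> UkLC adj k.+1.
Proof.
move=> [L [HL [c [[cL cP] c_unique]]]].
pose L' v := c v :: take k (rem (c v) (L v)).
have L'_sub v : {subset L' v <= L v}.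
  by move=> x; rewrite inE => /predU1P[->|/mem_take/mem_rem].
exists L'; split.
  move=> v; have [uL sL] := HL v; split.
    rewrite /= take_uniq ?rem_uniq // andbT.
    by apply: contraFN (mem_rem_uniqF (c v) uL) => /mem_take.
  by rewrite /= size_takel // size_rem ?cL // sL.
exists c; split; first by split => // v; apply: mem_head.
by move=> c' [c'L c'P]; apply: c_unique; split => // v; apply: L'_sub.
Qed.

Lemma UkLC_leq k m : 0 < k <= m -> UkLC adj m -> UkLC adj k.
Proof.
elim: m => [|m IH]; first by case: k.
case/andP => k_gt0; rewrite leq_eqVlt => /predU1P[-> //|k_le_m] Hm.
apply: IH; first by rewrite k_gt0.
by case: m Hm k_le_m => [|m]; [case: k k_gt0 | move/UkLC_pred].
Qed.

Hypothesis adj_sym : symmetric adj.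

Lemma unique_coloring_witness L c u x :
  L_coloring adj L c -> (forall c', L_coloring adj L c' -> forall v, c' v = c v) ->
  x \in L u -> x != c u -> exists2 w, adj u w & c w = x.
Proof.
move=> [cL cP] c_unique xL xu.
case: (pickP [pred w | adj u w && (c w == x)]) => [w /andP[uw /eqP] | none].
  by exists w.
pose c1 v := if v == u then x else c v.
have c1_col : L_coloring adj L c1.
  split=> [v | v w vw]; rewrite /c1.
    by case: eqP => [-> //|_]; apply: cL.
  have free y : adj u y -> x != c y.
    by move=> uy; have := none y; rewrite /= uy eq_sym => /negbT.
  case: (eqVneq v u) vw => [-> uw|_ vw]; case: (eqVneq w u) => [wu|_].
  - by move: uw; rewrite wu => /cP; rewrite eqxx.
  - exact: free.
  - by rewrite eq_sym; apply: free; rewrite adj_sym -wu.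
  - exact: cP.
by move: xu; rewrite -(c_unique c1 c1_col u) /c1 eqxx eqxx.
Qed.

Lemma clique_uses_palette (Q : {set T}) L c (pal : seq nat) :
  L_coloring adj L c -> (forall x y, x \in Q -> y \in Q -> x != y -> adj x y) ->
  (forall v, v \in Q -> {subset L v <= pal}) -> uniq pal -> size pal <= #|Q| ->
  forall x, x \in pal -> exists2 v, v \in Q & c v = x.
Proof.
move=> [cL cP] clique Lpal upal pal_Q x xpal.
have uQ : uniq [seq c v | v <- enum Q].
  rewrite map_inj_in_uniq ?enum_uniq // => v w; rewrite !mem_enum => vQ wQ cvw.
  have [//|vw] := eqVneq v w.
  by have := cP _ _ (clique v w vQ wQ vw); rewrite cvw eqxx.
have Qpal : {subset [seq c v | v <- enum Q] <= pal}.
  by move=> y /mapP[v]; rewrite mem_enum => vQ ->; apply: Lpal (cL v).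
have [_ Qpal_eq] := uniq_min_size uQ Qpal (ltac:(by rewrite size_map -cardE)).
by move: xpal; rewrite -Qpal_eq => /mapP[v]; rewrite mem_enum => vQ ->; exists v.
Qed.

Section CompleteOutside.
Variable A : {set T}.
Hypothesis clique : forall x y, x \notin A -> y \notin A -> x != y -> adj x y.

Lemma recolor_cycle (C : {set T}) L c (f : T -> T) :
  L_coloring adj L c -> C \subset ~: A -> f @: C = C ->
  (forall v, v \in C -> c (f v) \in L v /\ forall a, a \in A -> c a != c (f v)) ->
  L_coloring adj L (fun v => if v \in C then c (f v) else c v).
Proof.
move=> [cL cP] CA fC Hf.
have notA v : v \in C -> v \notin A by move=> vC; have := subsetP CA v vC; rewrite inE.
have fCC v : v \in C -> f v \in C by move=> vC; rewrite -fC imset_f.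
have finj : {in C &, injective f} by apply/imset_injP; rewrite fC.
have adj_neq v w : adj v w -> v != w by apply: contraTneq => ->; apply/negP => /cP; rewrite eqxx.
have mixed v w : v \in C -> w \notin C -> adj v w -> c (f v) != c w.
  move=> vC wC vw; have [wA|wA] := boolP (w \in A).
    by rewrite eq_sym; apply: (Hf v vC).2.
  apply: cP; apply: clique => //; first exact/notA/fCC.
  by apply: contraNneq wC => <-; apply: fCC.
split=> [v | v w vw].
  by case: ifP => vC; [apply: (Hf v vC).1 | apply: cL].
case: ifPn => vC; case: ifPn => wC.
- apply/cP/clique; try exact/notA/fCC.
  by apply: contra_neq (adj_neq v w vw) => /finj; apply.
- exact: mixed.
- by rewrite eq_sym; apply: mixed; rewrite // adj_sym.
- exact: cP.
Qed.

Lemma propM_of_clique_complement k : #|A| + 2 <= k -> ~: A != set0 -> propM adj k.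
Proof.
move=> hk nA [L [HL [c [col c_unique]]]].
pose P u w := [&& w \notin A, adj u w, c w \in L u & [forall a in A, c a != c w]].
have exP u : u \notin A -> exists w, P u w.
  move=> uA.
  have [x xL] : exists2 x, x \in L u & x \notin c u :: [seq c a | a <- enum A].
    apply: exists_notin; first exact: (HL u).1.
    by rewrite (HL u).2 /= size_map -cardE; lia.
  rewrite inE negb_or => /andP[xu xA].
  have Afree a : a \in A -> c a != x.
    by move=> aA; apply: contraNneq xA => <-; rewrite map_f ?mem_enum.
  have [w uw cw] := unique_coloring_witness col c_unique xL xu.
  exists w; rewrite /P uw cw xL /=; apply/andP; split.
    by apply/negP => /Afree; rewrite cw eqxx.
  exact/forall_inP.
pose f u := odflt u [pick w | P u w].
have Pf u : u \notin A -> P u (f u).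
  move=> uA; rewrite /f; case: pickP => [//|none].
  by have [w Pw] := exP u uA; move: (none w); rewrite Pw.
have [C [C0 CA fC]] : exists C, [/\ C != set0, C \subset ~: A & f @: C = C].
  apply: exists_imset_stable nA _; apply/subsetP => y /imsetP[u]; rewrite inE => uA ->.
  by rewrite inE; case/and4P: (Pf u uA).
have CnA v : v \in C -> v \notin A by move=> vC; have := subsetP CA v vC; rewrite inE.
have /c_unique c_eq : L_coloring adj L (fun v => if v \in C then c (f v) else c v).
  apply: recolor_cycle col CA fC _ => v vC.
  by case/and4P: (Pf v (CnA v vC)) => _ _ fvL /forall_inP fvA.
case/set0Pn: C0 => v vC; case/and4P: (Pf v (CnA v vC)) => _ vfv _ _.
by have := col.2 _ _ vfv; rewrite -(c_eq v) vC eqxx.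
Qed.
End CompleteOutside.
End ListColoring.

Section Matching.
Variables (n : nat) (F : seq ('I_n * 'I_n)).
Local Notation r := (size F).
Local Notation As := (map fst F).
Local Notation Bs := (map snd F).
Hypotheses (uniq_As : uniq As) (uniq_Bs : uniq Bs) (disj_AB : [disjoint As & Bs]).

(* The i-th edge of F is (a_i, b_i) with a_i = As`_i and b_i = Bs`_i, so the
   index of a matched vertex in As or Bs is the index of its edge. *)

Definition matched (v w : 'I_n) := [&& v \in As, w \in Bs & index v As == index w Bs].

Lemma mem_matching v w : ((v, w) \in F) = matched v w.
Proof.
apply/idP/and3P => [vwF | [vA wB /eqP vw]].
  have iF : index (v, w) F < r by rewrite index_mem.
  set i := index (v, w) F in iF.
  have vi : nth v As i = v by rewrite (nth_map (v, w)) // nth_index.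
  have wi : nth w Bs i = w by rewrite (nth_map (v, w)) // nth_index.
  split; first by rewrite -vi mem_nth ?size_map.
    by rewrite -wi mem_nth ?size_map.
  by rewrite -{1}vi -{1}wi !index_uniq ?size_map.
have iF : index v As < r by rewrite -(size_map fst) index_mem.
have <- : nth (v, w) F (index v As) = (v, w).
  rewrite [LHS]surjective_pairing -(nth_map _ v fst) // -(nth_map _ w snd) //.
  by rewrite {2}vw !nth_index.
exact: mem_nth.
Qed.

Lemma Kn_minusE v w : Kn_minus F v w = [&& v != w, ~~ matched v w & ~~ matched w v].
Proof.
rewrite /Kn_minus -!mem_matching; congr (_ && _).
by rewrite -negb_or -!has_pred1 -has_predU; congr (~~ _).
Qed.

Lemma Kn_minus_sym : symmetric (Kn_minus F).
Proof. by move=> v w; rewrite !Kn_minusE eq_sym; congr (_ && _); apply: andbC. Qed.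

Lemma Kn_minus_notin_As v w : v \notin As -> w \notin As -> v != w -> Kn_minus F v w.
Proof. by move=> vA wA vw; rewrite Kn_minusE vw /matched (negbTE vA) (negbTE wA). Qed.

Lemma Kn_minus_notin_Bs v w : v \notin Bs -> w \notin Bs -> v != w -> Kn_minus F v w.
Proof. by move=> vB wB vw; rewrite Kn_minusE vw /matched (negbTE vB) (negbTE wB) !andbF. Qed.

Lemma Kn_minus_index v w :
  v \in As -> w \in Bs -> index v As != index w Bs -> Kn_minus F v w.
Proof.
move=> vA wB vw; rewrite Kn_minusE /matched vA wB vw (disjointFl disj_AB wB) /= andbT.
by apply: contraTneq vA => ->; rewrite (disjointFl disj_AB wB).
Qed.

Definition singles := [set v | (v \notin As) && (v \notin Bs)].
Definition single_index v := index v (enum singles).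

Lemma Kn_minus_single v w : w \in singles -> v != w -> Kn_minus F v w.
Proof.
by rewrite inE => /andP[wA wB] vw; rewrite Kn_minusE vw /matched (negbTE wA) (negbTE wB) andbF.
Qed.

Lemma single_index_lt v : v \in singles -> single_index v < #|singles|.
Proof. by move=> vS; rewrite cardE index_mem mem_enum. Qed.

Lemma single_index_inj : {in singles &, injective single_index}.
Proof. by move=> v w vS wS; apply: (index_inj v); rewrite mem_enum. Qed.

Lemma single_of_index k (x0 : 'I_n) : k < #|singles| ->
  exists2 w, w \in singles & single_index w = k.
Proof.
move=> k_lt; rewrite cardE in k_lt; exists (nth x0 (enum singles) k).
  by have := mem_nth x0 k_lt; rewrite mem_enum.
exact: index_uniq (enum_uniq _).
Qed.

Lemma card_singles : #|singles| + r.*2 = n.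
Proof.
have cardAB : #|[set v in As] :|: [set v in Bs]| = r.*2.
  rewrite cardsU; suff -> : [set v in As] :&: [set v in Bs] = set0.
    by rewrite cards0 subn0 !cardsE (card_uniqP uniq_As) (card_uniqP uniq_Bs) !size_map addnn.
  by apply/setP => v; rewrite !inE; apply/negP => /andP[vA]; rewrite (disjointFr disj_AB vA).
have -> : singles = ~: ([set v in As] :|: [set v in Bs]).
  by apply/setP => v; rewrite !inE negb_or.
by rewrite -cardAB addnC cardsC card_ord.
Qed.

Definition matching_list v :=
  if v \in As then iota 0 r.+1
  else if v \in Bs then index v Bs :: iota r.+1 r
  else rcons (iota 0 r) (r + single_index v).

Definition matching_color v :=
  if v \in As then index v As
  else if v \in Bs then index v Bs
  else r + single_index v.

Lemma matching_list_size : k_list_assignment r.+1 matching_list.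
Proof.
move=> v; rewrite /matching_list; case: ifP => _; first by rewrite iota_uniq size_iota.
case: ifP => vB; last first.
  by rewrite rcons_uniq iota_uniq size_rcons size_iota mem_iota add0n ltnNge leq_addr.
rewrite /= iota_uniq size_iota mem_iota negb_and -ltnNge andbT.
by rewrite ltnW // ltnS -(size_map snd) index_mem.
Qed.

Lemma matching_color_eq u v : matching_color u = matching_color v ->
  [|| u == v, matched u v | matched v u].
Proof.
have idxA w : w \in As -> index w As < r by rewrite -(size_map fst) index_mem.
have idxB w : w \in Bs -> index w Bs < r by rewrite -(size_map snd) index_mem.
rewrite /matching_color /matched.
case: (boolP (u \in As)) => uA; case: (boolP (v \in As)) => vA /=.
- by move/index_inj => -> //; rewrite eqxx.
- case: ifP => vB uv; first by rewrite uv eqxx orbT.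
  by move: (idxA u uA); rewrite uv ltnNge leq_addr.
- case: ifP => uB uv; first by rewrite uv eqxx !orbT.
  by move: (idxA v vA); rewrite -uv ltnNge leq_addr.
case: ifP => uB; case: ifP => vB.
- by move/index_inj => -> //; rewrite eqxx.
- by move=> uv; move: (idxB u uB); rewrite uv ltnNge leq_addr.
- by move=> uv; move: (idxB v vB); rewrite -uv ltnNge leq_addr.
move/addnI/single_index_inj => -> //; first by rewrite eqxx.
  by rewrite inE uA uB.
by rewrite inE vA vB.
Qed.

Lemma matching_coloring : L_coloring (Kn_minus F) matching_list matching_color.
Proof.
split=> [v | u v].
  rewrite /matching_list /matching_color; case: ifP => vA; last first.
    by case: ifP => _; [apply: mem_head | rewrite mem_rcons mem_head].
  by rewrite mem_iota leq0n ltnS ltnW // -(size_map fst) index_mem.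
rewrite Kn_minusE => /and3P[uv nuv nvu]; apply: contraNneq uv => /matching_color_eq.
by rewrite (negbTE nuv) (negbTE nvu) !orbF.
Qed.

Lemma Bs_of_index i (x0 : 'I_n) : i < r -> exists2 b, b \in Bs & index b Bs = i.
Proof. by move=> i_lt; exists (nth x0 Bs i); rewrite ?mem_nth ?index_uniq ?size_map. Qed.

Section Uniqueness.
Hypothesis n_large : 3 * r + 1 <= n.
Variable c : 'I_n -> nat.
Hypothesis c_col : L_coloring (Kn_minus F) matching_list c.

Lemma matching_list_sub v : {subset matching_list v <= iota 0 (n - r)}.
Proof.
move=> x; have := card_singles; rewrite -addnn => card_S.
rewrite mem_iota add0n /matching_list.
case: ifP => [_|vA]; first by rewrite mem_iota; lia.
case: ifP => vB.
  rewrite inE mem_iota => /predU1P[->|]; last lia.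
  by have := index_mem v Bs; rewrite vB size_map; lia.
have vS : v \in singles by rewrite inE vA vB.
have := single_index_lt vS.
by rewrite mem_rcons inE mem_iota => lt /predU1P[->|]; lia.
Qed.

Lemma color_onto_outside (s : seq 'I_n) : uniq s -> size s = r ->
  (forall v w, v \notin s -> w \notin s -> v != w -> Kn_minus F v w) ->
  forall x, x < n - r -> exists2 v, v \notin s & c v = x.
Proof.
move=> us ss clique x x_lt.
have cardQ : #|[set v | v \notin s]| = n - r.
  have -> : [set v | v \notin s] = ~: [set v in s] by apply/setP => v; rewrite !inE.
  by rewrite cardsCs setCK card_ord cardsE (card_uniqP us) ss.
have [|||v] := clique_uses_palette c_col (Q := [set v | v \notin s]) _
  (fun v _ => @matching_list_sub v) (iota_uniq 0 (n - r)) _ (x := x).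
- by move=> v w; rewrite !inE; apply: clique.
- by rewrite size_iota cardQ.
- by rewrite mem_iota.
by rewrite inE => vs cv; exists v.
Qed.

Lemma color_single_pos v : v \in singles -> 0 < single_index v -> c v = r + single_index v.
Proof.
move=> vS j_pos; have := single_index_lt vS; have := card_singles; rewrite -addnn => card_S j_lt.
have [|w wB cw] := color_onto_outside uniq_Bs (size_map _ _) Kn_minus_notin_Bs
  (x := r + single_index v); first by lia.
have := c_col.1 w; rewrite /matching_list (negbTE wB) cw.
case: ifP => wA; first by rewrite mem_iota; lia.
have wS : w \in singles by rewrite inE wA.
rewrite mem_rcons inE eqn_add2l mem_iota => /predU1P[vw|]; last lia.
by rewrite -cw (single_index_inj vS wS vw).
Qed.

Lemma exists_single_colored_r : exists2 w, w \in singles & c w = r.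
Proof.
have := card_singles; rewrite -addnn => card_S.
have [|w wA cw] := color_onto_outside uniq_As (size_map _ _) Kn_minus_notin_As (x := r).
  by lia.
exists w => //; rewrite inE wA /=; apply/negP => wB.
have := c_col.1 w; rewrite /matching_list (negbTE wA) wB cw inE mem_iota.
case/predU1P => [|]; last lia.
by have := index_mem w Bs; rewrite wB size_map => + r_idx; rewrite -r_idx ltnn.
Qed.

Lemma color_Bs v : v \in Bs -> c v = index v Bs.
Proof.
move=> vB; have := c_col.1 v; rewrite /matching_list (disjointFl disj_AB vB) vB inE.
case/predU1P => [//|]; rewrite mem_iota => /andP[lo hi].
have := card_singles; rewrite -addnn => card_S.
have [|w wS w_idx] := single_of_index (k := c v - r) v; first lia.
have cw : c w = c v.
  by rewrite color_single_pos // w_idx ?subn_gt0 // subnKC // ltnW.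
have vw : v != w by apply: contraTneq vB => ->; move: wS; rewrite inE => /andP[].
by have := c_col.2 _ _ (Kn_minus_single wS vw); rewrite cw eqxx.
Qed.

Lemma color_singles v : v \in singles -> c v = r + single_index v.
Proof.
move=> vS; have := c_col.1 v; move: (vS); rewrite inE => /andP[vA vB].
rewrite /matching_list (negbTE vA) (negbTE vB) mem_rcons inE => /predU1P[//|].
rewrite mem_iota /= => c_lt.
have [b bB b_idx] := Bs_of_index v c_lt.
have bv : b != v by apply: contraTneq bB => ->.
by have := c_col.2 _ _ (Kn_minus_single vS bv); rewrite color_Bs // b_idx eqxx.
Qed.

Lemma color_As v : v \in As -> c v = index v As.
Proof.
move=> vA; have := c_col.1 v; rewrite /matching_list vA mem_iota /= ltnS leq_eqVlt.
case/predU1P => [c_r | c_lt].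
  have [w wS cw] := exists_single_colored_r.
  have vw : v != w by apply: contraTneq vA => ->; move: wS; rewrite inE => /andP[].
  by have := c_col.2 _ _ (Kn_minus_single wS vw); rewrite c_r cw eqxx.
have [//|ne] := eqVneq (c v) (index v As).
have [b bB b_idx] := Bs_of_index v c_lt.
have vb : index v As != index b Bs by rewrite b_idx eq_sym.
by have := c_col.2 _ _ (Kn_minus_index vA bB vb); rewrite (color_Bs bB) b_idx eqxx.
Qed.

Lemma matching_color_unique v : c v = matching_color v.
Proof.
rewrite /matching_color; case: ifP => [|vA]; first exact: color_As.
case: ifP => [|vB]; first exact: color_Bs.
by apply: color_singles; rewrite inE vA vB.
Qed.
End Uniqueness.

Lemma UkLC_Kn_minus_matching : 3 * r + 1 <= n -> UkLC (Kn_minus F) r.+1.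
Proof.
move=> n_large; exists matching_list; split; first exact: matching_list_size.
exists matching_color; split; first exact: matching_coloring.
by move=> c c_col v; apply: matching_color_unique.
Qed.

Lemma propM_Kn_minus_matching : r < n -> propM (Kn_minus F) (r + 2).
Proof.
move=> r_lt_n; have cardA : #|[set v in As]| = r.
  by rewrite cardsE (card_uniqP uniq_As) size_map.
apply: (propM_of_clique_complement Kn_minus_sym (A := [set v in As])).
- by move=> x y; rewrite !inE; apply: Kn_minus_notin_As.
- by rewrite cardA.
- by rewrite -card_gt0 cardsCs setCK card_ord cardA subn_gt0.
Qed.
End Matching.

Lemma matching_of_sizeP n r (F : seq ('I_n * 'I_n)) : matching_of_size r F ->
  [/\ size F = r, uniq (map fst F), uniq (map snd F) & [disjoint map fst F & map snd F]].
Proof.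
move=> [uF [sF [loopless disjoint_edges]]].
have inj (p : 'I_n * 'I_n -> 'I_n) : p = fst \/ p = snd -> {in F &, injective p}.
  move=> p_proj e f eF fF; apply: contra_eq => ef.
  by case: (disjoint_edges e f eF fF ef); case: p_proj => ->.
split=> //.
- by rewrite map_inj_in_uniq //; apply: inj; left.
- by rewrite map_inj_in_uniq //; apply: inj; right.
rewrite disjoint_has; apply/hasPn => _ /mapP[e eF ->]; apply/negP => /mapP[f fF].
have [->|ef] := eqVneq e f; first by apply/eqP/loopless.
by case: (disjoint_edges e f eF fF ef) => _ + _ _; move/eqP.
Qed.

Theorem proposition2p5 (r n : nat) (F : seq ('I_n * 'I_n)) :
  3 * r + 1 <= n -> matching_of_size r F ->
  is_m_number (Kn_minus F) (r + 2).
Proof.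
move=> n_large /matching_of_sizeP[sF uniq_As uniq_Bs disj_AB]; subst r.
split; first by rewrite addn2.
split; first by apply: propM_Kn_minus_matching => //; lia.
move=> k k_pos k_lt; apply; apply: (UkLC_leq (m := (size F).+1)).
  by rewrite k_pos -ltnS -addn2.
exact: UkLC_Kn_minus_matching.
Qed.
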